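(* Let $V$ be a real vector space of finite even dimension $n>2$ with a quadratic form $Q$ of anti-Lorentz signature $(1,n-1)$, and let $\rho$ be a $c$-compatible irreducible representation of $\mathbb{C}l(V)$ on a finite-dimensional complex vector space $K$ with nondegenerate hermitian form $(\cdot,\cdot)$, with chirality operator $\chi$. Let $u,v\in V$. Then the operator $\rho(u)+\chi\rho(v)$ is Krein-positive iff $u+v$ and $u-v$ are both timelike and future-directed.
   Context: $Cl(V,Q)$ is the real Clifford algebra with $v^2=+Q(v)$, $\mathbb{C}l(V)$ its complexification with complex conjugation $c$, $T$ the linear antiautomorphism restricting to the identity on $V$, $a^\times=c(T(a))$. $\rho$ is $c$-compatible if $(\rho(a)\psi,\phi)=(\psi,\rho(a^\times)\phi)$. A vector $v$ is timelike if $Q(v)>0$. The chirality operator is $\chi=(-i)^{n/2+q}\rho(\omega)$ with $q=n-1$ and $\omega=e_1\cdots e_n$ the volume element of a pseudo-orthonormal basis. An operator $A$ on $K$ is Krein-positive if $(\psi,A\psi)>0$ for all nonzero $\psi\in K$. The time orientation is fixed compatibly with the Krein product: a timelike vector $e$ is future-directed iff $\rho(e)$ is Krein-positive. *)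

From HB Require Import structures.
From mathcomp Require Import all_boot all_order all_algebra.
From mathcomp Require Import reals complex.
Set Implicit Arguments. Unset Strict Implicit. Unset Printing Implicit Defensive.
Import Order.TTheory GRing.Theory Num.Theory.
Local Open Scope ring_scope.

Section CliffordDefs.
Variable R : realType.
Local Notation C := (R[i]).

(* The real vector space V is R^n (row vectors); the quadratic form is given
   by a symmetric Gram matrix G : Q(x) = x G x^T, B its polar bilinear form. *)
Definition Bform n (G : 'M[R]_n) (x y : 'rV[R]_n) : R := (x *m G *m y^T) 0 0.
Definition Qform n (G : 'M[R]_n) (x : 'rV[R]_n) : R := Bform G x x.

Definition anti_lorentz n (G : 'M[R]_n) : Prop :=
  G^T = G /\
  exists P : 'M[R]_n, P \in unitmx /\
    P *m G *m P^T = diag_mx (\row_(i < n) (if val i == 0%N then 1 else -1)).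

Definition pseudo_orthonormal n (G : 'M[R]_n) (b : 'I_n -> 'rV[R]_n) : Prop :=
  forall i j : 'I_n, if i == j then (Qform G (b i) == 1) || (Qform G (b i) == -1)
                     else Bform G (b i) (b j) == 0.

Definition timelike n (G : 'M[R]_n) (x : 'rV[R]_n) : Prop := 0 < Qform G x.

Definition adjmx p q (A : 'M[C]_(p, q)) : 'M[C]_(q, p) := map_mx (@conjc R) A^T.

(* K = C^m (column vectors) with hermitian form (psi,phi) = psi^* H phi,
   antilinear in the first slot. *)
Definition krein m (H : 'M[C]_m) (psi phi : 'cV[C]_m) : C :=
  (adjmx psi *m H *m phi) 0 0.

Definition hermitian_mx m (H : 'M[C]_m) : Prop := adjmx H = H.

Definition krein_positive m (H : 'M[C]_m) (A : 'M[C]_m) : Prop :=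
  forall psi : 'cV[C]_m, psi != 0 -> 0 < krein H psi (A *m psi).

(* A representation rho of Cl(V) (complexified) on K is, by the universal
   property, an R-linear map V -> End(K) with rho(x)^2 = Q(x) Id. *)
Definition clifford_rep n m (G : 'M[R]_n) (rho : 'rV[R]_n -> 'M[C]_m) : Prop :=
  (forall (a : R) (x y : 'rV[R]_n), rho (a *: x + y) = (a%:C)%C *: rho x + rho y) /\
  (forall x, rho x *m rho x = ((Qform G x)%:C)%C%:M).

(* c-compatibility; since a |-> a^x is an antilinear antiautomorphism with
   v^x = v on V, and V generates Cl(V), it amounts to (rho(x) psi, phi) = (psi, rho(x) phi). *)
Definition c_compatible n m (H : 'M[C]_m) (rho : 'rV[R]_n -> 'M[C]_m) : Prop :=
  forall x psi phi, krein H (rho x *m psi) phi = krein H psi (rho x *m phi).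

(* Irreducible: K <> 0 and no complex subspace other than 0 and K is invariant
   (V together with the complex scalars generates CCl(V)). *)
Definition irreducible n m (rho : 'rV[R]_n -> 'M[C]_m) : Prop :=
  (0 < m)%N /\
  forall S : 'cV[C]_m -> Prop,
    S 0 -> (forall (a : C) psi phi, S psi -> S phi -> S (a *: psi + phi)) ->
    (forall x psi, S psi -> S (rho x *m psi)) ->
    (forall psi, S psi -> psi = 0) \/ (forall psi, S psi).

(* chirality operator chi = (-i)^(n/2+q) rho(e_1...e_n), q = n-1 *)
Definition chirality n m (rho : 'rV[R]_n -> 'M[C]_m) (b : 'I_n -> 'rV[R]_n) : 'M[C]_m :=
  (- 'i)%C ^+ (n./2 + n.-1) *: \big[mulmx/1%:M]_(i < n) rho (b i).

(* time orientation fixed by the Krein product *)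
Definition future_directed n m (G : 'M[R]_n) (H : 'M[C]_m)
    (rho : 'rV[R]_n -> 'M[C]_m) (e : 'rV[R]_n) : Prop :=
  timelike G e /\ krein_positive H (rho e).

End CliffordDefs.

(* The chirality chi squares to 1, anticommutes with every rho(x) and satisfies
   (chi a, c) = -(a, chi c), so its eigenspaces K+ and K- are Krein-neutral and
   every rho(x) swaps them.  Hence an operator A anticommuting with chi is
   Krein-positive iff it is positive on K+ and on K-.  The operator
   rho(u) + chi rho(v) anticommutes with chi and acts as rho(u - v) on K+ and as
   rho(u + v) on K-.  Positivity of rho(w) on K+ and on K- are equivalent: for a
   spacelike x orthogonal to w (which exists as n > 2), rho(x) maps one
   eigenspace injectively into the other and
   (rho(x) a, rho(w) rho(x) a) = -Q(x) (a, rho(w) a).  Finally a Krein-positive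
   rho(w) has Q(w) > 0. *)

From HB Require Import structures.
From mathcomp Require Import all_boot all_order all_algebra.
From mathcomp Require Import reals complex.
From mathcomp Require Import ring.
Set Implicit Arguments. Unset Strict Implicit. Unset Printing Implicit Defensive.
Import Order.TTheory GRing.Theory Num.Theory.
Local Open Scope ring_scope.
Local Open Scope complex_scope.

Section KreinForm.
Variables (R : realType) (m : nat) (H : 'M[R[i]]_m).
Local Notation C := R[i].

Lemma adjmxD p q (A B : 'M[C]_(p, q)) : adjmx (A + B) = adjmx A + adjmx B.
Proof. by rewrite /adjmx linearD map_mxD. Qed.

Lemma adjmxZ p q (c : C) (A : 'M[C]_(p, q)) : adjmx (c *: A) = c^* *: adjmx A.
Proof. by rewrite /adjmx linearZ map_mxZ. Qed.

Lemma kreinDl a b c : krein H (a + b) c = krein H a c + krein H b c.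
Proof. by rewrite /krein adjmxD !mulmxDl mxE. Qed.

Lemma kreinDr a b c : krein H a (b + c) = krein H a b + krein H a c.
Proof. by rewrite /krein mulmxDr mxE. Qed.

Lemma kreinZl (k : C) a c : krein H (k *: a) c = k^* * krein H a c.
Proof. by rewrite /krein adjmxZ -!scalemxAl mxE. Qed.

Lemma kreinZr (k : C) a c : krein H a (k *: c) = k * krein H a c.
Proof. by rewrite /krein -scalemxAr mxE. Qed.

Lemma krein0l c : krein H 0 c = 0.
Proof. by rewrite -(scale0r 0) kreinZl rmorph0 mul0r. Qed.

Lemma krein0r c : krein H c 0 = 0.
Proof. by rewrite -(scale0r 0) kreinZr mul0r. Qed.

Definition krein_adjoint (M M' : 'M[C]_m) :=
  forall a c, krein H (M *m a) c = krein H a (M' *m c).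

Lemma krein_adjointM M M' N N' :
  krein_adjoint M M' -> krein_adjoint N N' -> krein_adjoint (M *m N) (N' *m M').
Proof. by move=> hM hN a c; rewrite -mulmxA hM hN mulmxA. Qed.

Lemma krein_adjointZ M M' (k : C) :
  krein_adjoint M M' -> krein_adjoint (k *: M) (k^* *: M').
Proof. by move=> hM a c; rewrite -!scalemxAl kreinZl hM kreinZr. Qed.

End KreinForm.

Section ChiralSplitting.
Variables (R : realType) (m : nat) (H chi : 'M[R[i]]_m).
Hypothesis chi_sq : chi *m chi = 1%:M.
Hypothesis chi_adj : krein_adjoint H chi (- chi).
Local Notation C := R[i].

Definition chiral (s : bool) (a : 'cV[C]_m) := chi *m a = (-1) ^+ s *: a.

Definition chiral_part (s : bool) (a : 'cV[C]_m) :=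
  2^-1 *: (a + (-1) ^+ s *: (chi *m a)).

Lemma chiral_partP s a : chiral s (chiral_part s a).
Proof.
rewrite /chiral /chiral_part -!scalemxAr mulmxDr -scalemxAr mulmxA chi_sq mul1mx.
rewrite scalerA mulrC -scalerA; congr (_ *: _).
by rewrite scalerDr scalerA -expr2 sqrr_sign scale1r addrC.
Qed.

Lemma chiral_partE a : chiral_part false a + chiral_part true a = a.
Proof.
rewrite /chiral_part expr0 expr1 scale1r scaleN1r -scalerDr addrACA subrr addr0.
by rewrite -mulr2n -[a *+ 2]scaler_nat scalerA mulVf ?scale1r ?pnatr_eq0.
Qed.

Lemma krein_chiral s a c : chiral s a -> chiral s c -> krein H a c = 0.
Proof.
move=> ha hc; have := chi_adj a c.
rewrite ha mulNmx hc -scaleNr kreinZl kreinZr rmorph_sign mulNr => /eqP.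
by rewrite -addr_eq0 -mulr2n mulrn_eq0 /= mulf_eq0 signr_eq0 => /eqP.
Qed.

Definition chi_odd (A : 'M[C]_m) := chi *m A = - (A *m chi).

Lemma chiral_odd s A a : chi_odd A -> chiral s a -> chiral (~~ s) (A *m a).
Proof.
by move=> hA ha; rewrite /chiral mulmxA hA mulNmx -mulmxA ha -scalemxAr signrN scaleNr.
Qed.

Definition positive_on (S : 'cV[C]_m -> Prop) (A : 'M[C]_m) :=
  forall a, S a -> a != 0 -> 0 < krein H a (A *m a).

Lemma positive_on_eq S A B :
  (forall a, S a -> A *m a = B *m a) -> positive_on S A <-> positive_on S B.
Proof.
move=> eqAB; split=> hpos a Sa a_neq0.
- by rewrite -eqAB //; apply: hpos.
- by rewrite eqAB //; apply: hpos.
Qed.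

(* The cross terms vanish: A swaps the two eigenspaces of chi, each of which is
   neutral. *)
Lemma krein_odd_split A p q : chi_odd A -> chiral false p -> chiral true q ->
  krein H (p + q) (A *m (p + q)) = krein H p (A *m p) + krein H q (A *m q).
Proof.
move=> hA hp hq; rewrite mulmxDr kreinDl !kreinDr.
rewrite (krein_chiral hp (chiral_odd hA hq)) (krein_chiral hq (chiral_odd hA hp)).
by rewrite addr0 add0r.
Qed.

Lemma krein_positive_chiral A :
  chi_odd A -> krein_positive H A <-> forall s, positive_on (chiral s) A.
Proof.
move=> hA; split=> [hpos s a _ | hpos a]; first exact: hpos.
rewrite -(chiral_partE a).
move: (chiral_partP false a) (chiral_partP true a).
move: (chiral_part false a) (chiral_part true a) => p q hp hq pq_neq0.
rewrite krein_odd_split //.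
have nonneg s c : chiral s c -> 0 <= krein H c (A *m c).
  move=> hc; have [->|nz] := eqVneq c 0; first by rewrite krein0l.
  exact: ltW (hpos s c hc nz).
have [p0|p_neq0] := eqVneq p 0.
  by move: pq_neq0; rewrite p0 krein0l !add0r; apply: hpos hq.
by apply: ltr_pwDl; [exact: hpos hp p_neq0 | exact: nonneg hq].
Qed.

End ChiralSplitting.

Lemma prod_lorentz_signs (R : nzRingType) k : (0 < k)%N ->
  \prod_(i < k) (if val i == 0%N then 1 else -1 : R) = (-1) ^+ k.-1.
Proof.
case: k => // k _; rewrite big_ord_recl mul1r.
by rewrite (eq_bigr (fun _ => -1)) // prodr_const card_ord.
Qed.

Section QuadraticForm.
Variables (R : realType) (n : nat) (G : 'M[R]_n).

Lemma BformDl x y z : Bform G (x + y) z = Bform G x z + Bform G y z.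
Proof. by rewrite /Bform !mulmxDl mxE. Qed.

Lemma BformDr x y z : Bform G x (y + z) = Bform G x y + Bform G x z.
Proof. by rewrite /Bform linearD mulmxDr mxE. Qed.

Lemma BformZl a x z : Bform G (a *: x) z = a * Bform G x z.
Proof. by rewrite /Bform -!scalemxAl mxE. Qed.

Lemma BformZr a x z : Bform G x (a *: z) = a * Bform G x z.
Proof. by rewrite /Bform linearZ -scalemxAr mxE. Qed.

Lemma gram_mxE p (M : 'M[R]_(p, n)) i j :
  (M *m G *m M^T) i j = Bform G (row i M) (row j M).
Proof.
rewrite /Bform !mxE; apply: eq_bigr => k _; rewrite !mxE; congr (_ * _).
by apply: eq_bigr => l _; rewrite !mxE.
Qed.

Hypothesis G_sym : G^T = G.

Lemma BformC x y : Bform G x y = Bform G y x.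
Proof.
rewrite /Bform; transitivity ((x *m G *m y^T)^T 0 0); first by rewrite [RHS]mxE.
by rewrite !trmx_mul trmxK G_sym mulmxA.
Qed.

Section PseudoOrthonormalBasis.
Variable b : 'I_n -> 'rV[R]_n.
Hypothesis b_po : pseudo_orthonormal G b.

Lemma Qform_basis_sign i : (Qform G (b i) == 1) || (Qform G (b i) == -1).
Proof. by have := b_po i i; rewrite eqxx. Qed.

Lemma gram_basis :
  (\matrix_i b i) *m G *m (\matrix_i b i)^T = diag_mx (\row_i Qform G (b i)).
Proof.
apply/matrixP => i j; rewrite gram_mxE !rowK !mxE.
have := b_po i j; have [->|ij] := eqVneq i j; first by rewrite mulr1n.
by move/eqP => ->; rewrite mulr0n.
Qed.

Lemma basis_unitmx : \matrix_i b i \in unitmx.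
Proof.
rewrite unitmxE unitfE; apply/eqP => det0.
have := congr1 determinant gram_basis.
rewrite !det_mulmx det_tr det_diag det0 !mul0r => /esym/eqP.
case/prodf_eq0 => i _; rewrite mxE.
by case/orP: (Qform_basis_sign i) => /eqP ->; rewrite ?oppr_eq0 oner_eq0.
Qed.

Lemma pseudo_orthonormal_span x : exists c : 'I_n -> R, x = \sum_i c i *: b i.
Proof.
exists (fun i => (x *m invmx (\matrix_i b i)) 0 i).
under eq_bigr => i _ do rewrite -[b i](rowK b).
by rewrite -mulmx_sum_row -mulmxA mulVmx ?mulmx1 // basis_unitmx.
Qed.

(* The Gram matrices of b and of the basis given by [anti_lorentz] are congruent,
   so their determinants have the same sign, and both are [1] or [-1]. *)
Lemma prod_Qform_basis : anti_lorentz G -> (0 < n)%N ->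
  \prod_i Qform G (b i) = (-1) ^+ n.-1.
Proof.
move=> [_ [P [_ P_gram]]] n_gt0.
have diagE (d : 'I_n -> R) : \prod_i (\row_i d i) 0 i = \prod_i d i.
  by apply: eq_bigr => i _; rewrite mxE.
have := congr1 determinant gram_basis; have := congr1 determinant P_gram.
rewrite !det_mulmx !det_tr !det_diag !diagE prod_lorentz_signs //.
set q := \prod_i _; set s := (-1) ^+ n.-1 => det_P det_b.
have q2 : q ^+ 2 = 1.
  rewrite -prodrXl big1 // => i _.
  by case/orP: (Qform_basis_sign i) => /eqP ->; rewrite ?sqrrN expr1n.
have qs_ge0 : 0 <= q * s.
  rewrite -det_P -det_b.
  set d1 := \det _; set d2 := \det P.
  have -> : d1 * \det G * d1 * (d2 * \det G * d2) = (d1 * d2 * \det G) ^+ 2 by ring.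
  exact: sqr_ge0.
have : (q * s) ^+ 2 = 1 by rewrite exprMn q2 sqrr_sign mulr1.
move/eqP; rewrite sqrf_eq1 => /orP [/eqP qs1 | /eqP qsN1]; last first.
  by move: qs_ge0; rewrite qsN1 ler0N1.
by rewrite -[q]mulr1 -(sqrr_sign R n.-1) expr2 mulrA qs1 mul1r.
Qed.

End PseudoOrthonormalBasis.

(* Two of the negative directions of [anti_lorentz] span a negative definite
   plane, which meets the orthogonal of [w] nontrivially. *)
Lemma exists_spacelike_orthogonal w : anti_lorentz G -> (2 < n)%N ->
  exists x, Qform G x < 0 /\ Bform G x w = 0.
Proof.
move=> [_ [P [_ P_gram]]] n_gt2.
have B_P i j :
    Bform G (row i P) (row j P) = (if val i == 0%N then 1 else -1) *+ (i == j).
  by rewrite -gram_mxE P_gram !mxE.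
pose f1 := row (Ordinal (ltnW n_gt2)) P; pose f2 := row (Ordinal n_gt2) P.
have Q1 : Qform G f1 = -1 by rewrite /Qform B_P eqxx.
have Q2 : Qform G f2 = -1 by rewrite /Qform B_P eqxx.
have B12 : Bform G f1 f2 = 0 by rewrite B_P.
pose a := Bform G f1 w; pose c := Bform G f2 w.
have [ac0|ac_neq0] := eqVneq (a ^+ 2 + c ^+ 2) 0.
  exists f1; rewrite Q1 ltrN10; split => //.
  by move/eqP: ac0; rewrite paddr_eq0 ?sqr_ge0 // !sqrf_eq0 => /andP [/eqP].
exists (c *: f1 + (- a) *: f2); split.
  rewrite /Qform !(BformDl, BformDr, BformZl, BformZr) (BformC f2 f1).
  rewrite -!/(Qform G _) Q1 Q2 B12.
  have -> : c * (c * -1 + - a * 0) + (c * (- a * 0) + - a * (- a * -1))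
            = - (a ^+ 2 + c ^+ 2) by ring.
  by rewrite oppr_lt0 lt_def ac_neq0 addr_ge0 ?sqr_ge0.
by rewrite BformDl !BformZl -/a -/c; ring.
Qed.

End QuadraticForm.

Lemma size_index_enum_ord n : size (index_enum 'I_n) = n.
Proof. by rewrite [index_enum _]unlock -enumT size_enum_ord. Qed.

Lemma odd_bin2_even n : ~~ odd n -> odd 'C(n, 2) = odd n./2.
Proof.
move=> n_even; have -> : n = n./2.*2 by rewrite halfK (negbTE n_even) subn0.
rewrite half_double bin2 -doubleMl half_double oddM.
by case: n./2 => //= k; rewrite odd_double andbT.
Qed.

Section CliffordRep.
Variables (R : realType) (n m : nat) (G : 'M[R]_n) (rho : 'rV[R]_n -> 'M[R[i]]_m).
Hypothesis G_sym : G^T = G.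
Hypothesis rho_rep : clifford_rep G rho.
Local Notation C := R[i].

Let rho_lin := proj1 rho_rep.
Let rho_sq := proj2 rho_rep.

Lemma rho0 : rho 0 = 0.
Proof.
have := rho_lin 1 0 0; rewrite scaler0 addr0 rmorph1 scale1r.
by move/(congr1 (fun M => M - rho 0)); rewrite addrK subrr.
Qed.

Lemma rhoD x y : rho (x + y) = rho x + rho y.
Proof. by rewrite -[x]scale1r rho_lin rmorph1 !scale1r. Qed.

Lemma rhoZ a x : rho (a *: x) = a%:C *: rho x.
Proof. by rewrite -[a *: x]addr0 rho_lin rho0 addr0. Qed.

Lemma rhoB x y : rho (x - y) = rho x - rho y.
Proof. by rewrite rhoD -scaleN1r rhoZ rmorphN1 scaleN1r. Qed.

Lemma rho_anticomm x y :
  rho x *m rho y + rho y *m rho x = (2 * Bform G x y)%:C%:M.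
Proof.
have -> : rho x *m rho y + rho y *m rho x =
    rho (x + y) *m rho (x + y) - rho x *m rho x - rho y *m rho y.
  rewrite rhoD mulmxDl !mulmxDr.
  set a := rho x *m rho x; set b := rho x *m rho y.
  set c := rho y *m rho x; set d := rho y *m rho y.
  by rewrite [c + d]addrC addrACA -[_ - a - d]addrA -opprD [(a + d) + _]addrC addrK.
rewrite !rho_sq -!(raddfB (@scalar_mx _ m)) -!rmorphB /Qform; congr (_%:C%:M).
by rewrite BformDl !BformDr (BformC G_sym y x); ring.
Qed.

Lemma rho_anticomm_orth x y : Bform G x y = 0 -> rho x *m rho y = - (rho y *m rho x).
Proof.
by move=> Bxy; apply/eqP; rewrite -addr_eq0 rho_anticomm Bxy mulr0 rmorph0.
Qed.

Variable H : 'M[C]_m.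
Hypothesis rho_compat : c_compatible H rho.

(* (rho(w) psi, rho(w) rho(w) psi) = Q(w) (psi, rho(w) psi) *)
Lemma timelike_of_krein_positive w :
  (0 < m)%N -> krein_positive H (rho w) -> timelike G w.
Proof.
move=> m_gt0 w_pos; pose psi : 'cV[C]_m := const_mx 1.
have psi_neq0 : psi != 0.
  apply/eqP => /matrixP /(_ (Ordinal m_gt0) 0).
  by rewrite !mxE => /eqP; rewrite oner_eq0.
have w_psi_neq0 : rho w *m psi != 0.
  by apply: contraTneq (w_pos psi psi_neq0) => ->; rewrite krein0r ltxx.
have := w_pos _ w_psi_neq0.
rewrite mulmxA rho_sq mul_scalar_mx kreinZr rho_compat pmulr_lgt0 ?w_pos //.
by rewrite ltcE /= eqxx.
Qed.

Section Chirality.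
Variable b : 'I_n -> 'rV[R]_n.
Hypothesis b_po : pseudo_orthonormal G b.
Local Notation e i := (rho (b i)).
Local Notation omega s := (\big[mulmx/1%:M]_(i <- s) e i).

Lemma rho_basis_anticomm i j : i != j -> e i *m e j = - (e j *m e i).
Proof.
by move=> ij; apply: rho_anticomm_orth; have := b_po i j; rewrite (negbTE ij) => /eqP.
Qed.

Lemma rho_basis_mul_prod j s :
  e j *m omega s = (-1) ^+ count (predC1 j) s *: (omega s *m e j).
Proof.
elim: s => [|i s IH]; first by rewrite !big_nil mulmx1 mul1mx scale1r.
rewrite !big_cons /= mulmxA; have [->|ij] := eqVneq i j.
  by rewrite add0n -mulmxA [in LHS]IH -scalemxAr !mulmxA.
rewrite rho_basis_anticomm 1?eq_sym // mulNmx -[in LHS]mulmxA [in LHS]IH.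
by rewrite -scalemxAr mulmxA -scaleNr add1n exprS mulN1r.
Qed.

Lemma prod_mul_rho_basis i s : i \notin s ->
  omega s *m e i = (-1) ^+ size s *: (e i *m omega s).
Proof.
move=> i_notin; have count_s : count (predC1 i) s = size s.
  by rewrite -(count_predC (pred1 i)) (count_memPn i_notin).
by rewrite rho_basis_mul_prod count_s scalerA -expr2 sqrr_sign scale1r.
Qed.

Lemma prod_rho_basis_sq s : uniq s ->
  omega s *m omega s = ((-1) ^+ 'C(size s, 2) * \prod_(i <- s) (Qform G (b i))%:C)%:M.
Proof.
elim: s => [|i s IH]; first by rewrite !big_nil mulmx1 mul1r.
rewrite cons_uniq => /andP [i_notin s_uniq].
rewrite !big_cons -mulmxA (mulmxA (omega s)) prod_mul_rho_basis //.
rewrite -scalemxAl scalemxAr !mulmxA rho_sq -scalemxAr -mulmxA IH //.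
rewrite mul_scalar_mx !scale_scalar_mx binS bin1 /=; congr (_%:M).
by rewrite addnC exprD; ring.
Qed.

Lemma prod_rho_basis_adjoint s : uniq s ->
  krein_adjoint H (omega s) ((-1) ^+ 'C(size s, 2) *: omega s).
Proof.
elim: s => [|i s IH].
  by move=> _ a c; rewrite big_nil /= bin0n expr0 scale1r !mul1mx.
rewrite cons_uniq => /andP [i_notin s_uniq].
have := krein_adjointM (rho_compat (b i) : krein_adjoint H (e i) (e i)) (IH s_uniq).
by rewrite -scalemxAl prod_mul_rho_basis // scalerA -exprD big_cons binS bin1 addnC.
Qed.

Hypothesis G_al : anti_lorentz G.
Hypothesis n_even : ~~ odd n.
Hypothesis n_gt0 : (0 < n)%N.
Local Notation chi := (chirality rho b).

Let n_pred_odd : odd n.-1.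
Proof. by rewrite -[odd _]negbK -oddS prednK. Qed.

Lemma chirality_anticomm x : chi_odd chi (rho x).
Proof.
have [c ->] := pseudo_orthonormal_span b_po x.
rewrite /chi_odd (big_morph rho rhoD rho0) mulmx_sumr mulmx_suml -sumrN.
apply: eq_bigr => i _; rewrite rhoZ -scalemxAr -scalemxAl -scalerN; congr (_ *: _).
rewrite /chirality -scalemxAl -scalemxAr -scalerN; congr (_ *: _).
have count_n : count (predC1 i) (index_enum 'I_n) = n.-1.
  rewrite -[in RHS](size_index_enum_ord n) -(count_predC (pred1 i)).
  by rewrite count_uniq_mem ?index_enum_uniq // mem_index_enum.
by rewrite rho_basis_mul_prod count_n -signr_odd n_pred_odd expr1 scaleN1r opprK.
Qed.

(* omega^2 = (-1)^(C(n,2) + n - 1), and C(n,2) has the parity of n/2. *)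
Lemma chirality_sq : chi *m chi = 1%:M.
Proof.
rewrite /chirality -scalemxAl -scalemxAr scalerA.
rewrite prod_rho_basis_sq ?index_enum_uniq // size_index_enum_ord.
rewrite -rmorph_prod prod_Qform_basis // rmorph_sign scale_scalar_mx; congr (_%:M).
rewrite -exprMn mulrNN -expr2 sqr_i mulrA -!exprD -signr_odd !oddD.
by rewrite odd_bin2_even // n_pred_odd; case: (odd n./2).
Qed.

Lemma chirality_adjoint : krein_adjoint H chi (- chi).
Proof.
have := krein_adjointZ ((- 'i) ^+ (n./2 + n.-1))
  (prod_rho_basis_adjoint (index_enum_uniq 'I_n)).
rewrite size_index_enum_ord scalerA -scaleNr /chirality.
congr (krein_adjoint _ _ (_ *: _)).
rewrite rmorphXn rmorphN /= conjCi opprK (exprNn 'i) -mulNr mulrC; congr (_ * _).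
rewrite -signr_odd odd_bin2_even // -[in RHS]signr_odd oddD n_pred_odd addbT.
by rewrite signrN opprK.
Qed.

Hypothesis n_gt2 : (2 < n)%N.

Lemma positive_on_chiral_swap s w :
  positive_on H (chiral chi s) (rho w) -> positive_on H (chiral chi (~~ s)) (rho w).
Proof.
move=> hpos a ha a_neq0.
have [x [Qx_lt0 Bxw]] := exists_spacelike_orthogonal G_sym w G_al n_gt2.
have Qx_neq0 : (Qform G x)%:C != 0 :> C by rewrite fmorph_eq0 lt_eqF.
have xa_neq0 : rho x *m a != 0.
  apply: contraNneq a_neq0 => xa0; move: (congr1 (mulmx (rho x)) xa0).
  rewrite mulmxA rho_sq mul_scalar_mx mulmx0 => /eqP.
  by rewrite scaler_eq0 (negbTE Qx_neq0).
have xa_chiral : chiral chi s (rho x *m a).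
  by rewrite -[s]negbK; exact: chiral_odd (chirality_anticomm x) ha.
have sandwich : rho x *m rho w *m rho x = (- Qform G x)%:C *: rho w.
  rewrite (rho_anticomm_orth Bxw) mulNmx -mulmxA rho_sq mul_mx_scalar.
  by rewrite rmorphN scaleNr.
have := hpos _ xa_chiral xa_neq0.
rewrite rho_compat !mulmxA sandwich -scalemxAl kreinZr pmulr_rgt0 //.
by rewrite ltcE /= eqxx oppr_gt0.
Qed.

Lemma krein_positive_rho s w :
  krein_positive H (rho w) <-> positive_on H (chiral chi s) (rho w).
Proof.
rewrite (krein_positive_chiral chirality_sq chirality_adjoint (chirality_anticomm w)).
split=> [hpos | hs t]; first exact: hpos.
by case: s t hs => [] [] // /positive_on_chiral_swap.
Qed.

Lemma krein_positive_chirality_sum u v :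
  krein_positive H (rho u + chi *m rho v) <->
  krein_positive H (rho (u - v)) /\ krein_positive H (rho (u + v)).
Proof.
have rho_odd x : chi *m rho x = - (rho x *m chi) := chirality_anticomm x.
have A_odd : chi_odd chi (rho u + chi *m rho v).
  rewrite /chi_odd mulmxDr mulmxDl rho_odd mulmxA chirality_sq mul1mx.
  by rewrite rho_odd mulNmx -mulmxA chirality_sq mulmx1 opprD opprK.
have A_chiral s a : chiral chi s a ->
    (rho u + chi *m rho v) *m a = rho u *m a - (-1) ^+ s *: (rho v *m a).
  by move=> ha; rewrite mulmxDl rho_odd mulNmx -mulmxA ha -scalemxAr.
have A_plus a : chiral chi false a -> (rho u + chi *m rho v) *m a = rho (u - v) *m a.
  by move/A_chiral ->; rewrite rhoB mulmxBl expr0 scale1r.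
have A_minus a : chiral chi true a -> (rho u + chi *m rho v) *m a = rho (u + v) *m a.
  by move/A_chiral ->; rewrite rhoD mulmxDl expr1 scaleN1r opprK.
rewrite (krein_positive_chiral chirality_sq chirality_adjoint A_odd).
rewrite (krein_positive_rho false) (krein_positive_rho true).
rewrite -(positive_on_eq _ A_plus) -(positive_on_eq _ A_minus).
by split=> [hA | [hplus hminus] []] //; split; exact: hA.
Qed.

End Chirality.
End CliffordRep.

Theorem lemma8 (R : realType) (n m : nat) (G : 'M[R]_n)
    (rho : 'rV[R]_n -> 'M[R[i]]_m) (H : 'M[R[i]]_m)
    (b : 'I_n -> 'rV[R]_n) (u v : 'rV[R]_n) :
  ~~ odd n -> (2 < n)%N ->
  anti_lorentz G ->
  hermitian_mx H -> H \in unitmx ->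
  clifford_rep G rho -> c_compatible H rho -> irreducible rho ->
  pseudo_orthonormal G b ->
  krein_positive H (rho u + chirality rho b *m rho v) <->
  (future_directed G H rho (u + v) /\ future_directed G H rho (u - v)).
Proof.
move=> n_even n_gt2 G_al _ _ rho_rep rho_compat [m_gt0 _] b_po.
have G_sym : G^T = G by case: G_al.
have n_gt0 : (0 < n)%N by apply: leq_trans n_gt2.
rewrite (krein_positive_chirality_sum G_sym rho_rep rho_compat b_po G_al
           n_even n_gt0 n_gt2).
have timelike_of w := timelike_of_krein_positive rho_rep rho_compat (w := w) m_gt0.
rewrite /future_directed.
split=> [[pos_minus pos_plus] | [[_ pos_plus] [_ pos_minus]]];
  by do !split; try exact: timelike_of.
Qed.
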